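(* Let $\Phi(z)\in K(z)$ have degree $d\ge1$; put $B_0=B_0(\Phi)$ and $c_0=\Phi(0)$, and assume $\Phi(D(0,B_0)^-)=D(c_0,R)^-$ for some $R>0$. Suppose $|c_0|>1$ and $R\le|c_0|$. Then $\mathrm{Lip}_{\mathrm{Berk}}(\Phi|_{[0,\zeta_{0,B_0}]})\le d/B_0$.
   Context: $K$ is a complete, algebraically closed field with a nontrivial nonarchimedean absolute value. $D(a,r)^-=\{z\in K:|z-a|<r\}$. Fix $q>1$. $\mathbf P^1_{\mathrm{Berk}}$ is the Berkovich projective line over $K$ (tree containing $\mathbf P^1(K)$); $\zeta_{a,r}$ is the point of $D(a,r)=\{|z-a|\le r\}$, $\zeta_{a,0}=a$, $\zeta_G=\zeta_{0,1}$; $[x,y]$ unique path, $(x,y]$ half-open. $\rho$ is the logarithmic path metric on $\mathbf H^1=\mathbf P^1_{\mathrm{Berk}}\setminus\mathbf P^1(K)$ (path $\{\zeta_{a,r}:R_1\le r\le R_2\}$ has length $\log_q(R_2/R_1)$); $\mathrm{diam}_G(x)=q^{-\rho(\zeta_G,x)}$ on $\mathbf H^1$, $0$ on $\mathbf P^1(K)$. $x\vee_G y$ first common point of $[x,\zeta_G],[y,\zeta_G]$; $d(x,y)=2\mathrm{diam}_G(x\vee_G y)-\mathrm{diam}_G(x)-\mathrm{diam}_G(y)$. For $S\subseteq\mathbf P^1_{\mathrm{Berk}}$, $\mathrm{Lip}_{\mathrm{Berk}}(\Phi|_S)=\sup_{x\ne y\in S}d(\Phi x,\Phi y)/d(x,y)$.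 For $a\in\mathbf P^1(K)$, $0<r<1$, $Q_{a,r}$ is the point of $[a,\zeta_G]$ with $\mathrm{diam}_G=r$, $\mathcal B(a,r)^-=\{x:Q_{a,r}\in(x,\zeta_G]\}$, $\mathcal B(a,1)^-=\bigcup_{r<1}\mathcal B(a,r)^-$; $B_0(\Phi)=\sup\{0<r\le1:\Phi(\mathcal B(a,r)^-)\ne\mathbf P^1_{\mathrm{Berk}}\ \forall a\in\mathbf P^1(K)\}$. *)

From HB Require Import structures.
From mathcomp Require Import all_boot all_order all_algebra.
From Stdlib Require Import Reals ClassicalEpsilon.

Set Implicit Arguments.
Unset Strict Implicit.
Unset Printing Implicit Defensive.

Import GRing.Theory.
Local Open Scope ring_scope.
Delimit Scope ring_scope with ring.

Section Berk.
Variable K : closedFieldType.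
Variable absv : K -> R.

Definition Rcauchy (u : nat -> K) : Prop :=
  forall eps : R, (0 < eps)%R -> exists N : nat, forall m n : nat,
    leq N m -> leq N n -> (absv ((u m - u n)%ring) < eps)%R.

Definition nonarch_complete_abs : Prop :=
  (forall x : K, (0 <= absv x)%R) /\
  (forall x : K, absv x = 0%R <-> x = 0) /\
  (forall x y : K, absv ((x * y)%ring) = (absv x * absv y)%R) /\
  (forall x y : K, (absv ((x + y)%ring) <= Rmax (absv x) (absv y))%R) /\
  (exists x : K, absv x <> 0%R /\ absv x <> 1%R) /\
  (forall u : nat -> K, Rcauchy u -> exists l : K,
     forall eps : R, (0 < eps)%R -> exists N : nat, forall n : nat,
       leq N n -> (absv ((u n - l)%ring) < eps)%R).

(* A point of A^1_Berk is a multiplicative seminorm on K[T] extending absv;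
   P^1_Berk = A^1_Berk plus the point at infinity (None). *)
Definition mult_seminorm (s : {poly K} -> R) : Prop :=
  (forall p, (0 <= s p)%R) /\
  (forall c : K, s (c%:P) = absv c) /\
  (forall p q, s ((p * q)%ring) = (s p * s q)%R) /\
  (forall p q, (s ((p + q)%ring) <= Rmax (s p) (s q))%R).

Definition berk := option ({poly K} -> R).

Definition is_berk (x : berk) : Prop :=
  match x with None => True | Some s => mult_seminorm s end.

(* classical points: P^1(K) = option K, None = infinity *)
Definition clpt (a : option K) : berk :=
  match a with
  | None => None
  | Some a => Some (fun p => absv p.[a])
  end.

(* zeta_{a,r}: sup norm on D(a,r) = Gauss norm in the variable T - a *)
Definition zeta (a : K) (r : R) : berk :=
  Some (fun p : {poly K} =>
    let q := p \Po ('X + a%:P) in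
    foldr Rmax 0%R (map (fun i => (absv q`_i * r ^ i)%R) (iota 0 (size q)))).

Definition zetaG : berk := zeta 0 1.

(* partial order of the tree rooted at infinity: x below y *)
Definition le_inf (x y : berk) : Prop :=
  match y with
  | None => True
  | Some t => match x with None => False | Some s => forall f, (s f <= t f)%R end
  end.

(* z in the path [x,y] *)
Definition in_seg (x y z : berk) : Prop :=
  is_berk z /\ (le_inf x z \/ le_inf y z) /\
  (forall w, is_berk w -> le_inf x w -> le_inf y w -> le_inf z w).

Definition is_glb (E : R -> Prop) (m : R) : Prop :=
  is_lub (fun t => E (- t)%R) (- m)%R.
Definition Rinf (E : R -> Prop) : R :=
  epsilon (inhabits 0%R) (fun m => is_glb E m).

(* diam_G(x) = q^{-rho(zeta_G,x)}; for x in A^1_Berk this equals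
   diam(x) / max(1,[T]_x)^2 where diam(x) = inf_a [T - a]_x. *)
Definition diamG (x : berk) : R :=
  match x with
  | None => 0%R
  | Some s => (Rinf (fun t => exists a : K, t = s (('X - a%:P)%ring)) /
               (Rmax 1 (s ('X)%ring)) ^ 2)%R
  end.

(* x \/_G y : first common point of [x,zeta_G] and [y,zeta_G] *)
Definition joinG (x y : berk) : berk :=
  epsilon (inhabits None) (fun m =>
    in_seg x zetaG m /\ in_seg y zetaG m /\
    forall w, in_seg x zetaG w -> in_seg y zetaG w -> in_seg m zetaG w).

Definition dist (x y : berk) : R :=
  (2 * diamG (joinG x y) - diamG x - diamG y)%R.

(* Phi = P/Q with P,Q coprime, Q <> 0; degree = max(deg P, deg Q). *)
Definition ratmap (P Q : {poly K}) : Prop := coprimep P Q /\ Q != 0.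
Definition rdeg (P Q : {poly K}) : nat := (maxn (size P) (size Q)).-1.

Definition phi_cl (P Q : {poly K}) (a : option K) : option K :=
  match a with
  | Some a => if Q.[a] == 0 then None else Some (P.[a] / Q.[a])
  | None => if leq (size Q).+1 (size P) then None
            else if size P == size Q then Some (lead_coef P / lead_coef Q)
            else Some 0
  end.

(* homogenized f(P/Q) * Q^(deg f) *)
Definition homog (P Q f : {poly K}) : {poly K} :=
  \sum_(i < size f) (f`_i *: (P ^+ i * Q ^+ ((size f).-1 - i))).

(* action on P^1_Berk: [f]_{Phi(x)} = [f o Phi]_x *)
Definition phi_berk (P Q : {poly K}) (x : berk) : berk :=
  match x with
  | None => clpt (phi_cl P Q None)
  | Some s =>
      if Req_EM_T (s Q) 0 then None
      else Some (fun f => (s (homog P Q f) / (s Q) ^ (size f).-1)%R)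
  end.

Definition lip_le (P Q : {poly K}) (S : berk -> Prop) (c : R) : Prop :=
  forall x y, S x -> S y -> x <> y ->
    (dist (phi_berk P Q x) (phi_berk P Q y) <= c * dist x y)%R.

Definition isQ (a : option K) (r : R) (z : berk) : Prop :=
  in_seg (clpt a) zetaG z /\ diamG z = r.

(* B(a,r)^- for 0<r<1 : Q_{a,r} in (x, zeta_G] *)
Definition ball_lt1 (a : option K) (r : R) (x : berk) : Prop :=
  is_berk x /\ exists z, isQ a r z /\ in_seg x zetaG z /\ z <> x.

Definition ballB (a : option K) (r : R) (x : berk) : Prop :=
  ((r < 1)%R /\ ball_lt1 a r x) \/
  (r = 1%R /\ exists r', (0 < r' < 1)%R /\ ball_lt1 a r' x).

Definition B0set (P Q : {poly K}) (r : R) : Prop :=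
  (0 < r <= 1)%R /\
  forall a : option K, exists y, is_berk y /\
    forall x, ballB a r x -> phi_berk P Q x <> y.

Definition B0_of (P Q : {poly K}) (B0 : R) : Prop := is_lub (B0set P Q) B0.

Definition odisc (a : K) (r : R) (z : K) : Prop := (absv ((z - a)%ring) < r)%R.

End Berk.

(* The segment [[0, zeta_{0,B0}]] consists of the points [zeta_{0,r}], [0 <= r <= B0], and
   [diam_G zeta_{0,r} = r].  As [Q] has no zero in [D(0,B0)^-], its Gauss norm on [D(0,r)] is
   [|Q(0)|], and evaluating [Phi] on linear factors gives [Phi(zeta_{0,r}) = zeta_{c0,rho(r)}] with
   [rho(r) = ||P - c0 Q||_r / |Q(0)|]; since [rho(r) <= R <= |c0|], this point has
   [diam_G = rho(r) / |c0|^2].  By the maximum modulus principle [||P - c0 Q||_{B0} <= R |Q(0)|],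
   and as [P - c0 Q] vanishes at [0] and has degree at most [d], comparing its dominant
   monomials gives [rho(s) - rho(r) <= d (s - r) R / B0].  Dividing by [|c0|^2 >= |c0| >= R]
   yields the Lipschitz bound [d / B0]. *)

From Stdlib Require Import Reals Lra ClassicalEpsilon FunctionalExtensionality.
From HB Require Import structures.
From mathcomp Require Import all_boot all_order all_algebra.

Set Implicit Arguments.
Unset Strict Implicit.
Unset Printing Implicit Defensive.

Import GRing.Theory.
Local Open Scope ring_scope.
Delimit Scope R_scope with R.

HB.instance Definition _ :=
  Monoid.isComLaw.Build R 1%R Rmult (fun x y z => esym (Rmult_assoc x y z)) Rmult_comm Rmult_1_l.

Section MaxOfSeq.
Variables (T : eqType) (F : T -> R).

Lemma foldr_Rmax_ge s x : x \in s -> (F x <= foldr Rmax 0%R (map F s))%R.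
Proof.
elim: s => [|y s IH] //=; rewrite in_cons => /orP[/eqP-> | x_in_s].
  exact: Rmax_l.
by apply: Rle_trans (Rmax_r _ _); apply: IH.
Qed.

Lemma foldr_Rmax_le s M :
  (0 <= M)%R -> (forall x, x \in s -> F x <= M)%R -> (foldr Rmax 0%R (map F s) <= M)%R.
Proof.
elim: s => [|y s IH] //= M_ge0 hs; apply: Rmax_lub; first by apply: hs; rewrite mem_head.
by apply: IH => // x x_in_s; apply: hs; rewrite in_cons x_in_s orbT.
Qed.

Lemma foldr_Rmax_attained s : s != [::] -> (forall x, 0 <= F x)%R ->
  exists2 x, x \in s & foldr Rmax 0%R (map F s) = F x.
Proof.
move=> + F_ge0; elim: s => [|y [|z s] IH] //= _.
  by exists y; rewrite ?mem_head // Rmax_left.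
have [x x_in e] := IH isT; rewrite /= in e; rewrite e /Rmax.
case: Rle_dec => _; last by exists y; rewrite ?mem_head.
by exists x; rewrite // in_cons x_in orbT.
Qed.

End MaxOfSeq.

Lemma big_Rmult_le (I : Type) (l : seq I) (P : pred I) (F G : I -> R) :
  (forall i, P i -> 0 <= F i <= G i)%R ->
  (\big[Rmult/1%R]_(i <- l | P i) F i <= \big[Rmult/1%R]_(i <- l | P i) G i)%R.
Proof.
move=> FG; apply: (proj2 (big_ind2 (fun x y => 0 <= x <= y)%R _ _ _)) => [|x1 x2 y1 y2|i Pi].
- lra.
- by move=> ? ?; split; [apply: Rmult_le_pos | apply: Rmult_le_compat]; lra.
- exact: FG Pi.
Qed.

Lemma big_Rmult_const (I : Type) (l : seq I) (c : R) :
  \big[Rmult/1%R]_(i <- l) c = (c ^ size l)%R.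
Proof. by elim: l => [|i l IH]; rewrite ?big_nil // big_cons IH. Qed.

Lemma big_Rmult_scale (I : Type) (l : seq I) (c : R) (F : I -> R) :
  \big[Rmult/1%R]_(i <- l) (c * F i)%R = (c ^ size l * \big[Rmult/1%R]_(i <- l) F i)%R.
Proof. by rewrite big_split big_Rmult_const. Qed.

Lemma big_Rmult_unit (I : eqType) (l : seq I) (F : I -> R) :
  (forall i, i \in l -> 0 <= F i <= 1)%R -> (0 <= \big[Rmult/1%R]_(i <- l) F i <= 1)%R.
Proof.
elim: l => [|j l IH] F01; rewrite ?big_nil ?big_cons; first lra.
have [] := F01 j (mem_head _ _).
have [] : (0 <= \big[Rmult/1%R]_(i <- l) F i <= 1)%R.
  by apply: IH => i i_in; apply: F01; rewrite in_cons i_in orbT.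
nra.
Qed.

Lemma big_Rmult_eq1 (I : eqType) (l : seq I) (F : I -> R) :
  (forall i, i \in l -> 0 <= F i <= 1)%R -> \big[Rmult/1%R]_(i <- l) F i = 1%R ->
  forall i, i \in l -> F i = 1%R.
Proof.
elim: l => [|j l IH] // F01; rewrite big_cons => prod_eq1 i.
have F01_l i' : i' \in l -> (0 <= F i' <= 1)%R.
  by move=> i'_in; apply: F01; rewrite in_cons i'_in orbT.
have [Fj_ge0 Fj_le1] := F01 j (mem_head _ _).
have [rest_ge0 rest_le1] := big_Rmult_unit F01_l.
rewrite in_cons => /orP[/eqP-> | i_in]; first nra.
by apply: IH => //; nra.
Qed.

Lemma pow_sub_le r s k : (0 <= r)%R -> (r <= s)%R ->
  (s ^ k.+1 - r ^ k.+1 <= INR k.+1 * s ^ k * (s - r))%R.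
Proof.
move=> r_ge0 le_rs; elim: k => [|k IH]; first by rewrite /=; lra.
have -> : (s ^ k.+2 - r ^ k.+2 = s * (s ^ k.+1 - r ^ k.+1) + r ^ k.+1 * (s - r))%R.
  by rewrite /=; ring.
have rs_pow : (r ^ k.+1 <= s ^ k.+1)%R by apply: pow_incr.
have s_ge0 : (0 <= s)%R by lra.
have IHs : (s * (s ^ k.+1 - r ^ k.+1) <= INR k.+1 * s ^ k.+1 * (s - r))%R.
  have -> : (INR k.+1 * s ^ k.+1 * (s - r) = s * (INR k.+1 * s ^ k * (s - r)))%R.
    by rewrite [(s ^ k.+1)%R]/=; ring.
  exact: Rmult_le_compat_l.
have : (r ^ k.+1 * (s - r) <= s ^ k.+1 * (s - r))%R by apply: Rmult_le_compat_r; lra.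
rewrite S_INR; lra.
Qed.

Lemma pow_lt_1_small th y : (0 <= th < 1)%R -> (0 < y)%R -> exists N, (th ^ N < y)%R.
Proof.
move=> th01 y_gt0; have [|N HN] := pow_lt_1_zero th _ y y_gt0; first by rewrite Rabs_right; lra.
exists N; have := HN N (le_n N); rewrite Rabs_right //; apply: Rle_ge; apply: pow_le; lra.
Qed.

Lemma geometric_cross th c B : (0 <= th < 1)%R -> (0 < B)%R -> (B <= c)%R ->
  exists k, (B <= th ^ k * c)%R /\ (th ^ k.+1 * c < B)%R.
Proof.
move=> th01 B_gt0 le_Bc.
pose below k := if Rlt_dec (th ^ k * c) B then true else false.
have [|k0 below_k0 k0_min] := @ex_minnP below.
  have [N HN] := pow_lt_1_small th01 (Rdiv_lt_0_compat _ _ B_gt0 (Rlt_le_trans _ _ _ B_gt0 le_Bc)).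
  exists N; rewrite /below; case: Rlt_dec => // -[].
  by apply/(Rmult_lt_reg_r (/ c)); [apply: Rinv_0_lt_compat; lra | rewrite Rinv_r_simpl_l //; lra].
move: below_k0; rewrite /below; case: Rlt_dec => // lt_B _.
case: k0 lt_B k0_min => [|k] lt_B k0_min; first by rewrite /= Rmult_1_l in lt_B; lra.
exists k; split => //; apply: Rnot_lt_le => lt_k.
by have := k0_min k; rewrite /below; case: Rlt_dec => // _ /(_ isT); rewrite ltnn.
Qed.

Lemma monomial_le_of_lt c k B M : (0 < B)%R -> (0 <= c)%R ->
  (forall t, 0 < t < B -> c * t ^ k <= M)%R -> (c * B ^ k <= M)%R.
Proof.
move=> B_gt0 c_ge0 le_M; case: k le_M => [|k] le_M; first by have /= := le_M (B / 2)%R; apply; lra.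
apply: Rnot_lt_le => lt_M.
pose D := (c * INR k.+1 * B ^ k + 1)%R; pose del := ((c * B ^ k.+1 - M) / D)%R.
have cB_ge0 : (0 <= c * INR k.+1 * B ^ k)%R.
  by apply: Rmult_le_pos; [apply: Rmult_le_pos; [|apply: pos_INR] | apply: pow_le; lra].
have D_ge1 : (1 <= D)%R by rewrite /D; lra.
have del_gt0 : (0 < del)%R by apply: Rdiv_lt_0_compat; lra.
have del_D : (del * D = c * B ^ k.+1 - M)%R by rewrite /del; field; lra.
pose t := Rmax (B / 2)%R (B - del)%R.
have t_gt0 : (0 < t)%R by apply: Rlt_le_trans (Rmax_l _ _); lra.
have t_ltB : (t < B)%R by apply: Rmax_lub_lt; lra.
have le_Bt : (B - t <= del)%R by rewrite /t; have := Rmax_r (B / 2)%R (B - del)%R; lra.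
have := Rmult_le_compat_l _ _ _ c_ge0 (pow_sub_le k (Rlt_le _ _ t_gt0) (Rlt_le _ _ t_ltB)).
have := le_M t (conj t_gt0 t_ltB).
have : (c * INR k.+1 * B ^ k * (B - t) <= c * INR k.+1 * B ^ k * del)%R.
  exact: Rmult_le_compat_l.
rewrite /D in del_D; lra.
Qed.

Lemma Rinf_eq (E : R -> Prop) m : is_glb E m -> Rinf E = m.
Proof.
move=> E_m; rewrite /Rinf; set v := epsilon _ _.
have E_v : is_glb E v by apply: epsilon_spec; exists m.
by have := is_lub_u _ _ _ E_v E_m; lra.
Qed.

Lemma poly_factor_XsubC (K : closedFieldType) (p : {poly K}) :
  exists2 l : seq K, p = lead_coef p *: \prod_(b <- l) ('X - b%:P) & size l = (size p).-1.
Proof.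
have [->|p_neq0] := eqVneq p 0; first by exists [::]; rewrite ?lead_coef0 ?scale0r ?size_poly0.
have [l e] := closed_field_poly_normal p; exists l => //.
by rewrite [in RHS]e size_scale ?lead_coef_eq0 // size_prod_XsubC.
Qed.

Section Homogenization.
Variables (K : closedFieldType) (P Q : {poly K}).

Definition homog_at (N : nat) (g : {poly K}) : {poly K} :=
  \sum_(i < N.+1) g`_i *: (P ^+ i * Q ^+ (N - i)).

Lemma homogE (f : {poly K}) : homog P Q f = homog_at (size f).-1 f.
Proof.
rewrite /homog /homog_at; case sf: (size f) => [|n] //=.
by rewrite big_ord0 big_ord1 nth_default ?sf // scale0r.
Qed.

Lemma homog_atD N (g h : {poly K}) : homog_at N (g + h) = homog_at N g + homog_at N h.
Proof. by rewrite /homog_at -big_split; apply: eq_bigr => i _; rewrite coefD scalerDl. Qed.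

Lemma homog_atZ N c (g : {poly K}) : homog_at N (c *: g) = c *: homog_at N g.
Proof. by rewrite /homog_at scaler_sumr; apply: eq_bigr => i _; rewrite coefZ scalerA. Qed.

Lemma homog_at_mulX N (g : {poly K}) : homog_at N.+1 (g * 'X) = P * homog_at N g.
Proof.
rewrite /homog_at big_ord_recl coefMX /= scale0r add0r mulr_sumr; apply: eq_bigr => i _.
by rewrite coefMX /= /bump /= add1n subSS exprS -mulrA scalerAr.
Qed.

Lemma homog_at_succ N (g : {poly K}) : (size g <= N.+1)%N -> homog_at N.+1 g = Q * homog_at N g.
Proof.
move=> size_g; rewrite /homog_at big_ord_recr /= nth_default // scale0r addr0 mulr_sumr.
by apply: eq_bigr => i _; rewrite subSn 1?exprS 1?mulrCA ?scalerAr // -ltnS.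
Qed.

Lemma homog_at_mulXsubC N (g : {poly K}) b : (size g <= N.+1)%N ->
  homog_at N.+1 (g * ('X - b%:P)) = homog_at N g * (P - b *: Q).
Proof.
move=> size_g; rewrite mulrBr [g * b%:P]mulrC mul_polyC homog_atD -scaleNr homog_atZ.
rewrite homog_at_mulX homog_at_succ // mulrBr scaleNr -scalerAr mulrC [Q * _]mulrC.
by rewrite scalerAl.
Qed.

Lemma homog_at_prod l c :
  homog_at (size l) (c *: \prod_(b <- l) ('X - b%:P)) = c *: \prod_(b <- l) (P - b *: Q).
Proof.
elim: l c => [|b l IH] c.
  by rewrite !big_nil /homog_at big_ord1 coefZ coef1 /= mulr1 !expr0 mulr1 alg_polyC.
rewrite !big_cons /= scalerAr mulrC homog_at_mulXsubC; first by rewrite IH -scalerAl mulrC.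
by rewrite (leq_trans (size_scale_leq _ _)) // size_prod_XsubC.
Qed.

Lemma homog_factor (f : {poly K}) l : f = lead_coef f *: \prod_(b <- l) ('X - b%:P) ->
  size l = (size f).-1 -> homog P Q f = lead_coef f *: \prod_(b <- l) (P - b *: Q).
Proof. by move=> f_eq size_l; rewrite homogE -size_l {1}f_eq homog_at_prod. Qed.

End Homogenization.

Section AbsoluteValue.
Variables (K : closedFieldType) (absv : K -> R).
Hypothesis Habs : nonarch_complete_abs absv.
Implicit Types (f p q : {poly K}) (x y : K).

Lemma absv_ge0 x : (0 <= absv x)%R.
Proof. by case: Habs. Qed.

Lemma absv_eq0 x : absv x = 0%R <-> x = 0.
Proof. by case: Habs => _ []. Qed.

Lemma absvM x y : absv (x * y) = (absv x * absv y)%R.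
Proof. by case: Habs => _ [] _ []. Qed.

Lemma absvD_max x y : (absv (x + y) <= Rmax (absv x) (absv y))%R.
Proof. by case: Habs => _ [] _ [] _ []. Qed.

Lemma absv0 : absv 0 = 0%R.
Proof. exact/absv_eq0. Qed.

Lemma absv_gt0 {x} : x != 0 -> (0 < absv x)%R.
Proof.
move=> /eqP x_neq0; case: (absv_ge0 x) => // /esym /absv_eq0 x_eq0.
by case: x_neq0.
Qed.

Lemma absv1 : absv 1 = 1%R.
Proof.
have e := absvM 1 1; rewrite mulr1 in e.
have gt0 := absv_gt0 (oner_neq0 K).
by apply: (Rmult_eq_reg_l (absv 1)); [rewrite Rmult_1_r -e | apply: Rgt_not_eq].
Qed.

Lemma absvN x : absv (- x) = absv x.
Proof.
have sq1 := absvM (-1) (-1); rewrite mulrNN mulr1 absv1 in sq1.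
have N1 : absv (-1) = 1%R by have := absv_ge0 (-1); nra.
by rewrite -mulN1r absvM N1 Rmult_1_l.
Qed.

Lemma absv_subC x y : absv (x - y) = absv (y - x).
Proof. by rewrite -absvN opprB. Qed.

Lemma absvX x n : absv (x ^+ n) = (absv x ^ n)%R.
Proof. by elim: n => [|n IH]; rewrite ?expr0 ?absv1 // exprS absvM IH. Qed.

Lemma absvV x : absv x^-1 = (/ absv x)%R.
Proof.
have [->|x_neq0] := eqVneq x 0; first by rewrite invr0 absv0 Rinv_0.
have /Rgt_not_eq x_neq0' := absv_gt0 x_neq0.
apply: (Rmult_eq_reg_l (absv x)) => //.
by rewrite -absvM mulfV // absv1 Rinv_r.
Qed.

Lemma absvD_le x y M : (absv x <= M)%R -> (absv y <= M)%R -> (absv (x + y) <= M)%R.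
Proof. by move=> hx hy; apply: Rle_trans (absvD_max x y) _; apply: Rmax_lub. Qed.

Lemma absvB_le x y M : (absv x <= M)%R -> (absv y <= M)%R -> (absv (x - y) <= M)%R.
Proof. by move=> hx hy; apply: absvD_le; rewrite ?absvN. Qed.

Lemma absvD_dominant x y : (absv y < absv x)%R -> absv (x + y) = absv x.
Proof.
move=> lt_yx; apply: Rle_antisym; first by apply: absvD_le; lra.
have := absvD_max (x + y) (- y); rewrite addrK absvN.
rewrite /Rmax; case: Rle_dec; lra.
Qed.

Lemma absv_sum_le (I : Type) (s : seq I) (P : pred I) (F : I -> K) w M :
  (0 <= M)%R -> (0 <= w)%R -> (forall i, P i -> absv (F i) * w <= M)%R ->
  (absv (\sum_(i <- s | P i) F i) * w <= M)%R.
Proof.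
move=> M_ge0 w_ge0 hF; apply: (big_ind (fun x => absv x * w <= M)%R) => //.
  by rewrite absv0 Rmult_0_l.
move=> x y hx hy; apply: Rle_trans (Rmult_le_compat_r _ _ _ w_ge0 (absvD_max x y)) _.
by rewrite Rmult_comm -RmaxRmult // !(Rmult_comm w); apply: Rmax_lub.
Qed.

Lemma absv_sum_lt (I : Type) (s : seq I) (P : pred I) (F : I -> K) w M :
  (0 < M)%R -> (0 <= w)%R -> (forall i, P i -> absv (F i) * w < M)%R ->
  (absv (\sum_(i <- s | P i) F i) * w < M)%R.
Proof.
move=> M_gt0 w_ge0 hF; apply: (big_ind (fun x => absv x * w < M)%R) => //.
  by rewrite absv0 Rmult_0_l.
move=> x y hx hy; apply: Rle_lt_trans (Rmult_le_compat_r _ _ _ w_ge0 (absvD_max x y)) _.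
by rewrite Rmult_comm -RmaxRmult // !(Rmult_comm w); apply: Rmax_lub_lt.
Qed.

(** * Gauss norms *)

Definition gauss_norm r (q : {poly K}) : R :=
  foldr Rmax 0%R (map (fun i => absv q`_i * r ^ i)%R (iota 0 (size q))).

Section GaussNorm.
Variable r : R.
Hypothesis r_ge0 : (0 <= r)%R.

Lemma gauss_term_ge0 q i : (0 <= absv q`_i * r ^ i)%R.
Proof. by apply: Rmult_le_pos; [apply: absv_ge0 | apply: pow_le]. Qed.

Lemma gauss_norm_ge q i : (absv q`_i * r ^ i <= gauss_norm r q)%R.
Proof.
have [lt_i_q | le_q_i] := ltnP i (size q).
  by apply: foldr_Rmax_ge; rewrite mem_iota.
rewrite nth_default // absv0 Rmult_0_l /gauss_norm.
case: (size q) => [|n] /=; first lra.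
by apply: Rle_trans (Rmax_l _ _); apply: gauss_term_ge0.
Qed.

Lemma gauss_norm_ge0 q : (0 <= gauss_norm r q)%R.
Proof. exact: Rle_trans (gauss_term_ge0 q 0) (gauss_norm_ge q 0). Qed.

Lemma gauss_norm_le q M :
  (0 <= M)%R -> (forall i, absv q`_i * r ^ i <= M)%R -> (gauss_norm r q <= M)%R.
Proof. by move=> M_ge0 hq; apply: foldr_Rmax_le. Qed.

Lemma gauss_norm_attained q : exists i, gauss_norm r q = (absv q`_i * r ^ i)%R.
Proof.
case sq: (size q) => [|n].
  by exists 0%N; rewrite /gauss_norm sq nth_default ?sq // absv0 Rmult_0_l.
have [|i _ e] := @foldr_Rmax_attained _ (fun i => absv q`_i * r ^ i)%R (iota 0 (size q)) _
  (gauss_term_ge0 q); first by rewrite sq.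
by exists i.
Qed.

Lemma gauss_normD p q : (gauss_norm r (p + q) <= Rmax (gauss_norm r p) (gauss_norm r q))%R.
Proof.
apply: gauss_norm_le => [|i]; first exact: Rle_trans (gauss_norm_ge0 p) (Rmax_l _ _).
rewrite coefD; apply: Rle_trans (Rmult_le_compat_r _ _ _ (pow_le _ i r_ge0) (absvD_max _ _)) _.
rewrite Rmult_comm -RmaxRmult ?(Rmult_comm (r ^ i)); last exact: pow_le.
apply: Rle_trans (Rle_max_compat_r _ _ _ (gauss_norm_ge p i)) _.
exact: Rle_max_compat_l (gauss_norm_ge q i).
Qed.

Lemma gauss_normZ c q : gauss_norm r (c *: q) = (absv c * gauss_norm r q)%R.
Proof.
apply: Rle_antisym.
  apply: gauss_norm_le => [|i].
    by apply: Rmult_le_pos; [apply: absv_ge0 | apply: gauss_norm_ge0].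
  rewrite coefZ absvM Rmult_assoc.
  by apply: Rmult_le_compat_l; [apply: absv_ge0 | apply: gauss_norm_ge].
have [i ->] := gauss_norm_attained q.
by rewrite -Rmult_assoc -absvM -coefZ; apply: gauss_norm_ge.
Qed.

Lemma gauss_normN q : gauss_norm r (- q) = gauss_norm r q.
Proof. by rewrite -scaleN1r gauss_normZ absvN absv1 Rmult_1_l. Qed.

Lemma gauss_normC c : gauss_norm r c%:P = absv c.
Proof.
apply: Rle_antisym; last by have := gauss_norm_ge c%:P 0; rewrite coefC /= Rmult_1_r.
apply: gauss_norm_le => [|[|i]]; rewrite ?coefC /=; first exact: absv_ge0.
  by rewrite Rmult_1_r; apply: Rle_refl.
by rewrite absv0 Rmult_0_l; apply: absv_ge0.
Qed.

Lemma gauss_norm0 : gauss_norm r 0 = 0%R.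
Proof. by rewrite -polyC0 gauss_normC absv0. Qed.

Lemma gauss_norm_first_attained q : exists i0,
  gauss_norm r q = (absv q`_i0 * r ^ i0)%R /\
  forall i, (i < i0)%N -> (absv q`_i * r ^ i < gauss_norm r q)%R.
Proof.
pose attains i := if Req_EM_T (absv q`_i * r ^ i)%R (gauss_norm r q) then true else false.
have [|i0 att i0_min] := @ex_minnP attains.
  have [i e] := gauss_norm_attained q; exists i; rewrite /attains.
  by case: Req_EM_T => // ne; exfalso; apply: ne.
exists i0; split; first by move: att; rewrite /attains; case: Req_EM_T.
move=> i lt_i_i0; case: (gauss_norm_ge q i) => // e.
by have := i0_min i; rewrite /attains; case: Req_EM_T => // _ /(_ isT); rewrite leqNgt lt_i_i0.
Qed.

Lemma gauss_term_split p q j k : (j <= k)%N ->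
  (absv (p`_j * q`_(k - j)) * r ^ k = (absv p`_j * r ^ j) * (absv q`_(k - j) * r ^ (k - j)))%R.
Proof.
move=> le_jk; have -> : (r ^ k = r ^ j * r ^ (k - j))%R by rewrite -pow_add plusE subnKC.
by rewrite absvM; ring.
Qed.

Lemma gauss_normM_le p q : (gauss_norm r (p * q) <= gauss_norm r p * gauss_norm r q)%R.
Proof.
have gp := gauss_norm_ge0 p; have gq := gauss_norm_ge0 q.
apply: gauss_norm_le => [|k]; first exact: Rmult_le_pos.
rewrite coefM; apply: absv_sum_le => [||j _]; [exact: Rmult_le_pos | exact: pow_le |].
rewrite gauss_term_split; last exact: ltnSE (ltn_ord j).
by apply: Rmult_le_compat; try apply: gauss_term_ge0; apply: gauss_norm_ge.
Qed.

(* The coefficient of index [i0 + j0], for [i0], [j0] the first indices where the norms of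
   [p] and [q] are attained, has a single dominant term. *)
Lemma gauss_normM_ge p q : (gauss_norm r p * gauss_norm r q <= gauss_norm r (p * q))%R.
Proof.
have [gp0|gp_gt0] := Req_dec (gauss_norm r p) 0.
  by rewrite gp0 Rmult_0_l; exact: gauss_norm_ge0.
have [gq0|gq_gt0] := Req_dec (gauss_norm r q) 0.
  by rewrite gq0 Rmult_0_r; exact: gauss_norm_ge0.
have {}gp_gt0 : (0 < gauss_norm r p)%R by have := gauss_norm_ge0 p; lra.
have {}gq_gt0 : (0 < gauss_norm r q)%R by have := gauss_norm_ge0 q; lra.
have [i0 [ei0 lt_i0]] := gauss_norm_first_attained p.
have [j0 [ej0 lt_j0]] := gauss_norm_first_attained q.
pose k := (i0 + j0)%N.
have lt_i0_k : (i0 < k.+1)%N by rewrite ltnS leq_addr.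
have gpq_gt0 := Rmult_lt_0_compat _ _ gp_gt0 gq_gt0.
have lead : (absv (p`_i0 * q`_j0) * r ^ k = gauss_norm r p * gauss_norm r q)%R.
  by have := gauss_term_split p q (leq_addr j0 i0); rewrite addKn -ei0 -ej0.
have rk_gt0 : (0 < r ^ k)%R.
  by case: (pow_le r k r_ge0) => // rk0; move: gpq_gt0; rewrite -lead -rk0 Rmult_0_r; lra.
have cross : (absv (\sum_(j < k.+1 | j != Ordinal lt_i0_k) p`_j * q`_(k - j)) * r ^ k
              < gauss_norm r p * gauss_norm r q)%R.
  apply: absv_sum_lt => // [|j]; first exact: pow_le.
  rewrite -val_eqE /= => j_neq_i0; have le_jk := ltnSE (ltn_ord j).
  rewrite gauss_term_split //.
  have t1 := gauss_term_ge0 p j; have t2 := gauss_term_ge0 q (k - j).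
  have g1 := gauss_norm_ge p j; have g2 := gauss_norm_ge q (k - j).
  have [lt_j_i0 | le_i0_j] := ltnP j i0; first by have := lt_i0 j lt_j_i0; nra.
  have lt_kj_j0 : (k - j < j0)%N.
    by rewrite ltn_subLR // /k ltn_add2r ltn_neqAle eq_sym j_neq_i0.
  by have := lt_j0 _ lt_kj_j0; nra.
have := gauss_norm_ge (p * q) k; rewrite coefM (bigD1 (Ordinal lt_i0_k)) //= /k addKn -/k.
rewrite absvD_dominant //; first by rewrite lead.
by apply: (Rmult_lt_reg_r (r ^ k)); rewrite // lead.
Qed.

Lemma gauss_normM p q : gauss_norm r (p * q) = (gauss_norm r p * gauss_norm r q)%R.
Proof. by apply: Rle_antisym; [apply: gauss_normM_le | apply: gauss_normM_ge]. Qed.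

End GaussNorm.

Lemma gauss_norm_mono r s q :
  (0 <= r)%R -> (r <= s)%R -> (gauss_norm r q <= gauss_norm s q)%R.
Proof.
move=> r_ge0 le_rs; have [i ->] := gauss_norm_attained r_ge0 q.
apply: Rle_trans (gauss_norm_ge (Rle_trans _ _ _ r_ge0 le_rs) q i).
by apply: Rmult_le_compat_l; [apply: absv_ge0 | apply: pow_incr].
Qed.

Lemma gauss_norm_at0 q : gauss_norm 0 q = absv q`_0.
Proof.
apply: Rle_antisym; last by have := gauss_norm_ge (Rle_refl 0) q 0; rewrite Rmult_1_r.
apply: gauss_norm_le => [|[|i]] /=; [exact: absv_ge0 | lra |].
by rewrite Rmult_0_l Rmult_0_r; apply: absv_ge0.
Qed.

Lemma gauss_norm_horner q z : (absv q.[z] <= gauss_norm (absv z) q)%R.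
Proof.
have z_ge0 := absv_ge0 z.
rewrite horner_coef -[absv _]Rmult_1_r; apply: absv_sum_le => [||i _]; try lra.
  exact: gauss_norm_ge0.
by rewrite absvM absvX Rmult_1_r; apply: gauss_norm_ge.
Qed.

Lemma gauss_norm_XaddC r a : (0 <= r)%R -> gauss_norm r ('X + a%:P) = Rmax (absv a) r.
Proof.
move=> r_ge0; apply: Rle_antisym.
  apply: gauss_norm_le => // [|[|[|i]]]; rewrite ?coefD ?coefX ?coefC /=.
  - exact: Rle_trans (Rmax_r _ _).
  - by rewrite add0r Rmult_1_r; apply: Rmax_l.
  - by rewrite addr0 absv1 Rmult_1_l Rmult_1_r; apply: Rmax_r.
  - by rewrite addr0 absv0 Rmult_0_l; apply: Rle_trans (Rmax_r _ _).
apply: Rmax_lub.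
  by have := gauss_norm_ge r_ge0 ('X + a%:P) 0; rewrite coefD coefX coefC /= add0r Rmult_1_r.
have := gauss_norm_ge r_ge0 ('X + a%:P) 1.
by rewrite coefD coefX coefC /= addr0 absv1 Rmult_1_l Rmult_1_r.
Qed.

Lemma gauss_norm_seminorm r : (0 <= r)%R -> mult_seminorm absv (gauss_norm r).
Proof.
move=> r_ge0; split; first exact: gauss_norm_ge0.
split; first exact: gauss_normC.
by split; [apply: gauss_normM | apply: gauss_normD].
Qed.

Lemma seminorm_scale_prod (s : {poly K} -> R) (G : K -> {poly K}) c l :
  mult_seminorm absv s ->
  s (c *: \prod_(b <- l) G b) = (absv c * \big[Rmult/1%R]_(b <- l) s (G b))%R.
Proof.
case=> _ [sC [sM _]]; have s1 : s 1 = 1%R by rewrite -polyC1 sC absv1.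
by rewrite -mul_polyC sM sC (big_morph s sM s1).
Qed.

Lemma seminorm_le_linear (s t : {poly K} -> R) :
  mult_seminorm absv s -> mult_seminorm absv t ->
  (forall b, Rle (s ('X - b%:P)) (t ('X - b%:P))) -> forall p, (s p <= t p)%R.
Proof.
move=> s_seminorm t_seminorm le_st p; have [l -> _] := poly_factor_XsubC p.
rewrite !seminorm_scale_prod //; apply: Rmult_le_compat_l; first exact: absv_ge0.
by apply: big_Rmult_le => b _; split; [case: s_seminorm | apply: le_st].
Qed.

Lemma seminorm_eq_linear (s t : {poly K} -> R) :
  mult_seminorm absv s -> mult_seminorm absv t ->
  (forall b, s ('X - b%:P) = t ('X - b%:P)) -> s = t.
Proof.
move=> s_seminorm t_seminorm e; apply: functional_extensionality => p.
by apply: Rle_antisym; apply: seminorm_le_linear => // b; rewrite e; apply: Rle_refl.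
Qed.

(** * Points [zeta_{a,r}] of the Berkovich line *)

Definition disc_norm (a : K) (r : R) (p : {poly K}) : R := gauss_norm r (p \Po ('X + a%:P)).

Lemma zetaE a r : zeta absv a r = Some (disc_norm a r).
Proof. by []. Qed.

Lemma disc_norm_seminorm a r : (0 <= r)%R -> mult_seminorm absv (disc_norm a r).
Proof.
move=> r_ge0; have [g_ge0 [gC [gM gD]]] := gauss_norm_seminorm r_ge0.
split=> [p|]; first exact: g_ge0.
split=> [c|]; first by rewrite /disc_norm comp_polyC gC.
by split=> p q; rewrite /disc_norm (comp_polyM, comp_polyD).
Qed.

Lemma zeta_is_berk a r : (0 <= r)%R -> is_berk absv (zeta absv a r).
Proof. exact: disc_norm_seminorm. Qed.

Lemma disc_norm0 r : disc_norm 0 r = gauss_norm r.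
Proof. by apply: functional_extensionality => p; rewrite /disc_norm addr0 comp_polyXr. Qed.

Lemma disc_norm_XsubC a r b : (0 <= r)%R -> disc_norm a r ('X - b%:P) = Rmax (absv (a - b)) r.
Proof.
move=> r_ge0; rewrite /disc_norm comp_polyB comp_polyX comp_polyC -addrA -polyCB.
exact: gauss_norm_XaddC.
Qed.

Lemma disc_norm_X a r : (0 <= r)%R -> disc_norm a r 'X = Rmax (absv a) r.
Proof. by move=> r_ge0; rewrite -[in LHS](subr0 'X) disc_norm_XsubC // subr0. Qed.

Lemma le_inf_refl (x : berk K) : le_inf x x.
Proof. by case: x => [s|] //= f; apply: Rle_refl. Qed.

Lemma le_inf_trans (x y z : berk K) : le_inf x y -> le_inf y z -> le_inf x z.
Proof.
case: z => [u|] //; case: y => [t|] //; case: x => [s|] //= le_st le_tu f.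
exact: Rle_trans (le_st f) (le_tu f).
Qed.

Lemma le_inf_anti (x y : berk K) : le_inf x y -> le_inf y x -> x = y.
Proof.
case: y => [t|]; case: x => [s|] //= le_st le_ts.
by congr Some; apply: functional_extensionality => f; apply: Rle_antisym.
Qed.

Lemma in_seg_refl (x z y : berk K) : in_seg absv x z y -> in_seg absv y z y.
Proof. by case=> y_berk _; split=> //; split=> //; left; apply: le_inf_refl. Qed.

Lemma in_seg_anti (z u v : berk K) : in_seg absv u z v -> in_seg absv v z u -> u = v.
Proof.
move=> [v_berk [uv_or_zv v_min]] [u_berk [vu_or_zu u_min]]; apply: le_inf_anti.
  by case: uv_or_zv => // zv; apply: u_min => //; apply: le_inf_refl.
by case: vu_or_zu => // zu; apply: v_min => //; apply: le_inf_refl.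
Qed.

Lemma joinG_in_seg (x y : berk K) : in_seg absv x (zetaG absv) y ->
  joinG absv x y = y /\ joinG absv y x = y.
Proof.
set G := zetaG absv; move=> x_y; have y_y := in_seg_refl x_y.
suff join_eq u v : in_seg absv u G y -> in_seg absv v G y ->
    (forall w, in_seg absv u G w -> in_seg absv v G w -> in_seg absv y G w) -> joinG absv u v = y.
  by split; apply: join_eq.
move=> u_y v_y y_min; rewrite /joinG; set spec := fun m => _ /\ _.
have [u_m [v_m m_min]] :=
  epsilon_spec (inhabits None) spec (ex_intro _ y (conj u_y (conj v_y y_min))).
exact: in_seg_anti (m_min y u_y v_y) (y_min _ u_m v_m).
Qed.

Lemma dist_in_seg (x y : berk K) : in_seg absv x (zetaG absv) y ->
  dist absv x y = (diamG y - diamG x)%R /\ dist absv y x = (diamG y - diamG x)%R.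
Proof. by case/joinG_in_seg => jxy jyx; rewrite /dist jxy jyx; split; ring. Qed.

Lemma diamG_zeta a r : (0 <= r)%R ->
  diamG (zeta absv a r) = (r / (Rmax 1 (Rmax (absv a) r)) ^ 2)%R.
Proof.
move=> r_ge0; rewrite zetaE /diamG disc_norm_X //; congr (_ / _)%R.
apply: Rinf_eq; split=> [t [b]|m m_ub].
  rewrite disc_norm_XsubC // => e.
  by apply: Ropp_le_cancel; rewrite Ropp_involutive e; apply: Rmax_r.
by apply: m_ub; exists a; rewrite Ropp_involutive disc_norm_XsubC // subrr absv0 Rmax_right.
Qed.

Lemma diamG_zeta0 r : (0 <= r)%R -> (r <= 1)%R -> diamG (zeta absv 0 r) = r.
Proof.
move=> r_ge0 r_le1; rewrite diamG_zeta // absv0 (Rmax_right 0%R r) // (Rmax_left 1%R r) //.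
by rewrite /= !Rmult_1_r /Rdiv Rinv_1 Rmult_1_r.
Qed.

Lemma diamG_zeta_far a r : (1 <= absv a)%R -> (0 <= r)%R -> (r <= absv a)%R ->
  diamG (zeta absv a r) = (r / absv a ^ 2)%R.
Proof. by move=> a_ge1 r_ge0 le_ra; rewrite diamG_zeta // (Rmax_left (absv a) r) // Rmax_right. Qed.

Lemma zeta_le_inf a r s : (0 <= r)%R -> (r <= s)%R -> le_inf (zeta absv a r) (zeta absv a s).
Proof. by move=> r_ge0 le_rs f; apply: gauss_norm_mono. Qed.

Lemma in_seg_zeta0 r s : (0 <= r)%R -> (r <= s)%R -> (s <= 1)%R ->
  in_seg absv (zeta absv 0 r) (zetaG absv) (zeta absv 0 s).
Proof.
move=> r_ge0 le_rs s_le1; split; first by apply: zeta_is_berk; lra.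
split; first by left; apply: zeta_le_inf.
by move=> w _ _; apply: le_inf_trans; apply: zeta_le_inf; lra.
Qed.

(* If [|a - b| < s <= |a|] then [|b| = |a| >= s], so above [zetaG] the factor [X - b] already
   has norm at least [s]. *)
Lemma in_seg_zeta_far a r s : (1 <= absv a)%R -> (0 <= r)%R -> (r <= s)%R -> (s <= absv a)%R ->
  in_seg absv (zeta absv a r) (zetaG absv) (zeta absv a s).
Proof.
move=> a_ge1 r_ge0 le_rs s_le_a; have s_ge0 : (0 <= s)%R by lra.
split; first exact: zeta_is_berk.
split; first by left; apply: zeta_le_inf.
case=> [t|] // t_berk le_rt le_Gt f.
apply: (seminorm_le_linear (disc_norm_seminorm a s_ge0) t_berk) => b.
have le_rt_b : Rle (disc_norm a r ('X - b%:P)) (t ('X - b%:P)) := le_rt _.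
have le_Gt_b : Rle (disc_norm 0 1 ('X - b%:P)) (t ('X - b%:P)) := le_Gt _.
rewrite !disc_norm_XsubC ?sub0r ?absvN in le_rt_b le_Gt_b *; try lra.
have b_far : (absv (a - b) < s)%R -> absv b = absv a.
  move=> lt_ab_s; have -> : b = a + - (a - b) by rewrite opprB addrC subrK.
  by rewrite absvD_dominant // absvN; lra.
move: b_far le_rt_b le_Gt_b; set ab := absv (a - b); set tb := t _ => b_far.
have := Rmax_l ab r; have := Rmax_l (absv b) 1.
move=> ? ? ? ?; apply: Rmax_lub; first lra.
by have [?|/b_far ?] := Rle_lt_dec s ab; lra.
Qed.

Lemma clpt0_le_zeta r : (0 <= r)%R -> le_inf (clpt absv (Some 0)) (zeta absv 0 r).
Proof.
move=> r_ge0 p; change (absv p.[0] <= disc_norm 0 r p)%R; rewrite disc_norm0 horner_coef0.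
by have := gauss_norm_ge r_ge0 p 0; rewrite Rmult_1_r.
Qed.

Lemma above_clpt0_zeta s : mult_seminorm absv s ->
  le_inf (clpt absv (Some 0)) (Some s) -> Some s = zeta absv 0 (s 'X).
Proof.
move=> s_seminorm le_0s; have [s_ge0 [sC [_ sD]]] := s_seminorm.
have r_ge0 := s_ge0 'X; rewrite zetaE; congr Some.
apply: (seminorm_eq_linear s_seminorm (disc_norm_seminorm 0 r_ge0)) => b.
rewrite disc_norm_XsubC // sub0r absvN.
have lo : Rle (absv ('X - b%:P).[0]) (s ('X - b%:P)) := le_0s _.
rewrite hornerXsubC sub0r absvN in lo.
have hi := sD 'X (- b%:P); rewrite -polyCN sC absvN polyCN in hi.
have hX := sD ('X - b%:P) b%:P; rewrite subrK sC in hX.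
move: lo hi hX; set sb := s _; set r := s 'X => lo hi hX.
have [le_rb|lt_br] := Rle_lt_dec r (absv b).
  by rewrite Rmax_left //; rewrite Rmax_right // in hi; lra.
rewrite Rmax_right; last lra.
rewrite Rmax_left in hi; last lra.
by move: hX; rewrite /Rmax; case: Rle_dec; lra.
Qed.

Lemma in_seg_clpt0_zeta B z : (0 <= B)%R ->
  in_seg absv (clpt absv (Some 0)) (zeta absv 0 B) z ->
  exists2 r, (0 <= r <= B)%R & z = zeta absv 0 r.
Proof.
move=> B_ge0 [z_berk [le_0z_or_Bz z_min]].
have le_zB : le_inf z (zeta absv 0 B).
  by apply: z_min; [apply: zeta_is_berk | apply: clpt0_le_zeta | apply: le_inf_refl].
case: le_0z_or_Bz => [le_0z|le_Bz]; last by exists B; [lra | apply: le_inf_anti].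
case: z z_berk le_0z le_zB {z_min} => [s|] // s_seminorm le_0s le_sB.
exists (s 'X); last exact: above_clpt0_zeta.
have sX_le : Rle (s 'X) (disc_norm 0 B 'X) := le_sB _.
by rewrite disc_norm_X // absv0 Rmax_right // in sX_le; split; [case: s_seminorm |].
Qed.

(** * Maximum modulus principle *)

Fixpoint unit_nodes (us : seq K) : Prop :=
  if us is u :: us' then
    [/\ (absv u <= 1)%R, forall v, v \in us' -> absv (u - v) = 1%R & unit_nodes us']
  else True.

Lemma unit_nodes_le1 us u : unit_nodes us -> u \in us -> (absv u <= 1)%R.
Proof.
elim: us => [|v us IH] //= [v_le1 _ nodes]; rewrite in_cons => /orP[/eqP-> //|].
exact: IH.
Qed.

(* Newton interpolation: the divided differences at nodes of mutual distance 1 are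
   bounded by the values of [G] at the nodes. *)
Lemma gauss_norm1_le_nodes us (G : {poly K}) M : unit_nodes us -> (size G <= size us)%N ->
  (0 <= M)%R -> (forall u, u \in us -> absv G.[u] <= M)%R -> (gauss_norm 1 G <= M)%R.
Proof.
elim: us G => [|u us IH] G /=.
  by move=> _; rewrite leqn0 size_poly_eq0 => /eqP-> M_ge0 _; rewrite (gauss_norm0 Rle_0_1).
move=> [u_le1 u_far nodes] size_G M_ge0 G_le.
have /factor_theorem [G1 eG1] : root (G - G.[u]%:P) u.
  by rewrite rootE !hornerE subrr.
have G_eq : G = G1 * ('X - u%:P) + G.[u]%:P by rewrite -eG1 subrK.
have size_G1 : (size G1 <= size us)%N.
  have [->|G1_neq0] := eqVneq G1 0; first by rewrite size_poly0.
  have size_G1X : size (G1 * ('X - u%:P)) = (size G1).+1.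
    by rewrite size_Mmonic ?monicXsubC // size_XsubC addn2.
  move: size_G; rewrite G_eq size_polyDl size_G1X ?ltnS //.
  by apply: leq_trans (size_polyC_leq1 _) _; rewrite lt0n size_poly_eq0.
have G1_le : (gauss_norm 1 G1 <= M)%R.
  apply: IH => // v v_in.
  have Gvu : absv (G.[v] - G.[u]) = absv G1.[v].
    rewrite -[G.[u]](hornerC _ v) -hornerN -hornerD eG1 hornerM hornerXsubC.
    by rewrite absvM absv_subC u_far // Rmult_1_r.
  by rewrite -Gvu; apply: absvB_le; apply: G_le; rewrite ?mem_head // in_cons v_in orbT.
rewrite {1}G_eq; apply: Rle_trans (gauss_normD Rle_0_1 _ _) _; apply: Rmax_lub.
  have XsubC_norm : gauss_norm 1 ('X - u%:P) = 1%R.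
    by rewrite -polyCN gauss_norm_XaddC ?absvN ?Rmax_right //; apply: Rle_0_1.
  by rewrite (gauss_normM Rle_0_1) XsubC_norm Rmult_1_r.
by rewrite (gauss_normC Rle_0_1); apply: G_le; rewrite mem_head.
Qed.

(* Take a root [u] of [prod_v (X - v) - 1]: the distances [|u - v| <= 1] multiply to [1]. *)
Lemma exists_far_node us : unit_nodes us ->
  exists2 u, (absv u <= 1)%R & forall v, v \in us -> absv (u - v) = 1%R.
Proof.
case: us => [|w ws] nodes; first by exists 0; rewrite ?absv0 //; lra.
set us := w :: ws in nodes *.
have us_le1 v : v \in us -> (absv v <= 1)%R by apply: unit_nodes_le1.
have [u /rootP] : exists u, root (\prod_(v <- us) ('X - v%:P) - 1) u.
  by apply/closed_rootP; rewrite size_polyDl size_prod_XsubC // size_polyN size_poly1.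
rewrite hornerD hornerN hornerC horner_prod => /eqP; rewrite subr_eq0 => /eqP prod_eq1.
have abs_prod : \big[Rmult/1%R]_(v <- us) absv (u - v) = 1%R.
  rewrite -(big_morph absv absvM absv1) -[RHS]absv1 -[in RHS]prod_eq1.
  by congr absv; apply: eq_bigr => v _; rewrite hornerXsubC.
have u_le1 : (absv u <= 1)%R.
  apply: Rnot_lt_le => u_gt1; move: abs_prod.
  rewrite (eq_big_seq (fun _ => absv u)) => [|v /us_le1 v_le1]; last first.
    by rewrite absvD_dominant // absvN; lra.
  rewrite big_Rmult_const => pow_eq1.
  by have := Rlt_pow_R1 _ (size us) u_gt1 (Nat.lt_0_succ _); rewrite pow_eq1; apply: Rlt_irrefl.
exists u => // v v_in; apply: (big_Rmult_eq1 _ abs_prod) => // v' v'_in.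
by split; [apply: absv_ge0 | apply: absvB_le => //; apply: us_le1].
Qed.

Lemma exists_unit_nodes n : exists2 us, size us = n & unit_nodes us.
Proof.
elim: n => [|n [us size_us nodes]]; first by exists [::].
by have [u u_le1 u_far] := exists_far_node nodes; exists (u :: us); rewrite /= ?size_us.
Qed.

Lemma exists_absv_in01 : exists x, (0 < absv x < 1)%R.
Proof.
case: Habs => _ [_ [_ [_ [[x [x_neq0 x_neq1]] _]]]].
have x_gt0 : (0 < absv x)%R by have := absv_ge0 x; lra.
have [x_lt1|x_ge1] := Rlt_le_dec (absv x) 1; first by exists x; lra.
exists x^-1; rewrite absvV; split; first exact: Rinv_0_lt_compat.
by rewrite -Rinv_1; apply: Rinv_lt_contravar; lra.
Qed.

Lemma exists_absv_root x n : exists y, (absv y ^ n.+1)%R = absv x.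
Proof.
have /closed_rootP [y /rootP] : size ('X^(n.+1) - x%:P) != 1%N by rewrite size_XnsubC.
by rewrite !hornerE => /eqP; rewrite subr_eq0 => /eqP y_root; exists y; rewrite -absvX y_root.
Qed.

(* The value group is dense: a root [y] of a small element has [t / B < |y| < 1], and a
   suitable power of [y] times a large element lands in [(t, B)]. *)
Lemma exists_absv_between t B : (0 < t)%R -> (t < B)%R -> exists a, (t < absv a < B)%R.
Proof.
move=> t_gt0 lt_tB; have B_gt0 : (0 < B)%R by lra.
have tB01 : (0 <= t / B < 1)%R.
  split; first by apply: Rlt_le; apply: Rdiv_lt_0_compat.
  by apply: (Rmult_lt_reg_r B) => //; rewrite Rmult_1_l /Rdiv Rmult_assoc Rinv_l; lra.
have [x [x_gt0 x_lt1]] := exists_absv_in01.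
have [N tBN_lt] := pow_lt_1_small tB01 x_gt0.
have [y y_root] := exists_absv_root x N.
have y_lt1 : (absv y < 1)%R.
  by apply: Rnot_le_lt => y_ge1; have := pow_R1_Rle _ N.+1 y_ge1; lra.
have y_gt_tB : (t / B < absv y)%R.
  apply: Rnot_le_lt => y_le; have := pow_incr _ _ N.+1 (conj (absv_ge0 y) y_le).
  by rewrite y_root /=; have := pow_le (t / B)%R N (proj1 tB01); nra.
have y01 : (0 <= absv y < 1)%R by have := absv_ge0 y; lra.
have y_gt0 : (0 < absv y)%R := Rlt_trans _ _ _ (Rdiv_lt_0_compat _ _ t_gt0 B_gt0) y_gt_tB.
have [M yM_lt] := pow_lt_1_small y01 (Rinv_0_lt_compat _ B_gt0).
have yM_gt0 : (0 < absv y ^ M)%R by apply: pow_lt.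
have le_B_inv : (B <= absv (y ^+ M)^-1)%R.
  rewrite absvV absvX -[B]Rinv_inv; apply: Rlt_le; apply: Rinv_lt_contravar => //.
  by apply: Rmult_lt_0_compat => //; apply: Rinv_0_lt_compat.
have [k [le_B lt_B]] := geometric_cross y01 B_gt0 le_B_inv.
exists (y ^+ k.+1 * (y ^+ M)^-1); rewrite absvM absvX; split => //.
have tB_B : (t / B * B = t)%R by field; lra.
by rewrite /= Rmult_assoc; have := Rmult_lt_compat_r B _ _ B_gt0 y_gt_tB; nra.
Qed.

(* Interpolating [f(aX)] at unit nodes bounds [|f_k| |a|^k] for every [|a| < B], and the
   density of [|K^*|] lets [|a|] tend to [B]. *)
Lemma gauss_norm_le_sup f B M : (0 < B)%R -> (0 <= M)%R ->
  (forall z, absv z < B -> absv f.[z] <= M)%R -> (gauss_norm B f <= M)%R.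
Proof.
move=> B_gt0 M_ge0 f_le; apply: gauss_norm_le => // k.
apply: monomial_le_of_lt => // [|t [t_gt0 lt_tB]]; first exact: absv_ge0.
have [a [lt_ta lt_aB]] := exists_absv_between t_gt0 lt_tB.
apply: (Rle_trans _ (absv f`_k * absv a ^ k)).
  by apply: Rmult_le_compat_l; [apply: absv_ge0 | apply: pow_incr; lra].
have [us size_us nodes] := exists_unit_nodes (size f).
pose G := \poly_(i < size f) (f`_i * a ^+ i).
have G_le : (gauss_norm 1 G <= M)%R.
  apply: (gauss_norm1_le_nodes nodes) => // [|u u_in]; first by rewrite size_us size_poly.
  have -> : G.[u] = f.[a * u].
    by rewrite horner_poly horner_coef; apply: eq_bigr => i _; rewrite exprMn mulrA.
  apply: f_le; rewrite absvM; have := unit_nodes_le1 nodes u_in.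
  by have := absv_ge0 a; have := absv_ge0 u; nra.
have := gauss_norm_ge Rle_0_1 G k; rewrite pow1 Rmult_1_r coef_poly.
case: ltnP => [_|le_fk]; last by rewrite nth_default // absv0 Rmult_0_l.
by rewrite absvM absvX => Gk_le; apply: Rle_trans Gk_le G_le.
Qed.

Lemma gauss_norm_sub_le f d r s B : f`_0 = 0 -> (size f <= d.+1)%N ->
  (0 <= r)%R -> (r <= s)%R -> (s <= B)%R -> (0 < B)%R ->
  (gauss_norm s f - gauss_norm r f <= INR d * (s - r) / B * gauss_norm B f)%R.
Proof.
move=> f0 size_f r_ge0 le_rs le_sB B_gt0; have s_ge0 : (0 <= s)%R by lra.
have rhs_ge0 : (0 <= INR d * (s - r) / B * gauss_norm B f)%R.
  apply: Rmult_le_pos; last by apply: gauss_norm_ge0; lra.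
  apply: Rmult_le_pos; last by apply: Rlt_le; apply: Rinv_0_lt_compat.
  by apply: Rmult_le_pos; [apply: pos_INR | lra].
have [k ek] := gauss_norm_attained s_ge0 f; have gr := gauss_norm_ge r_ge0 f k.
have gr_ge0 := gauss_norm_ge0 r_ge0 f.
have [fk0|fk_neq0] := eqVneq f`_k 0; first by rewrite ek fk0 absv0 Rmult_0_l; lra.
case: k ek gr fk_neq0 => [|k] ek gr fk_neq0; first by rewrite f0 eqxx in fk_neq0.
have le_kd : (k.+1 <= d)%N.
  by rewrite -ltnS (leq_trans _ size_f) // ltnNge; apply: contra fk_neq0 => /(nth_default 0) ->.
have fk_ge0 := absv_ge0 f`_k.+1.
have Bk_ge0 : (0 <= B ^ k)%R by apply: pow_le; lra.
have diff_le := Rmult_le_compat_l _ _ _ fk_ge0 (pow_sub_le k r_ge0 le_rs).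
have sk_le : (absv f`_k.+1 * s ^ k <= absv f`_k.+1 * B ^ k)%R.
  by apply: Rmult_le_compat_l => //; apply: pow_incr; lra.
have kd : (INR k.+1 <= INR d)%R by apply: le_INR; apply/leP.
have fB := gauss_norm_ge (Rlt_le _ _ B_gt0) f k.+1.
have -> : (INR d * (s - r) / B * gauss_norm B f =
  INR d * (s - r) * (gauss_norm B f / B))%R by field; lra.
have fB_div : (absv f`_k.+1 * B ^ k <= gauss_norm B f / B)%R.
  have -> : (absv f`_k.+1 * B ^ k = absv f`_k.+1 * B ^ k.+1 / B)%R by rewrite /=; field; lra.
  by apply: Rmult_le_compat_r => //; apply: Rlt_le; apply: Rinv_0_lt_compat.
have sk_ge0 : (0 <= s ^ k)%R by apply: pow_le.
have ds_ge0 : (0 <= INR d * (s - r))%R by apply: Rmult_le_pos; [apply: pos_INR | lra].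
have := Rmult_le_compat_l _ _ _ ds_ge0 (Rle_trans _ _ _ sk_le fB_div).
have : (absv f`_k.+1 * (INR k.+1 * s ^ k * (s - r)) <= INR d * (s - r) * (absv f`_k.+1 * s ^ k))%R.
  have -> : (absv f`_k.+1 * (INR k.+1 * s ^ k * (s - r)) =
    INR k.+1 * (s - r) * (absv f`_k.+1 * s ^ k))%R by ring.
  apply: Rmult_le_compat_r; first exact: Rmult_le_pos.
  by apply: Rmult_le_compat_r; lra.
lra.
Qed.

Lemma gauss_norm_no_root_in_disc g B r : (forall z, (absv z < B)%R -> g.[z] != 0) ->
  (0 <= r)%R -> (r <= B)%R -> gauss_norm r g = absv g.[0].
Proof.
move=> g_neq0 r_ge0 le_rB.
have [->|g_neq] := eqVneq g 0; first by rewrite gauss_norm0 // horner0 absv0.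
have [l g_eq _] := poly_factor_XsubC g.
rewrite horner_coef0 -gauss_norm_at0 g_eq.
rewrite (seminorm_scale_prod _ _ _ (gauss_norm_seminorm r_ge0)).
rewrite (seminorm_scale_prod _ _ _ (gauss_norm_seminorm (Rle_refl 0))).
congr (_ * _)%R; apply: eq_big_seq => b b_in.
have b_root : root g b by rewrite g_eq rootZ ?lead_coef_eq0 // root_prod_XsubC.
have b_far : (B <= absv b)%R by apply: Rnot_lt_le => /g_neq0; rewrite (rootP b_root) eqxx.
by rewrite -polyCN !gauss_norm_XaddC ?absvN ?Rmax_left //; try lra.
Qed.

Lemma gauss_normD_const_dominant f g r : (0 <= r)%R -> f`_0 = 0 ->
  gauss_norm r g = absv g`_0 -> gauss_norm r (f + g) = Rmax (gauss_norm r f) (gauss_norm r g).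
Proof.
move=> r_ge0 f0 g_flat; apply: Rle_antisym; first exact: gauss_normD.
have g_le : (gauss_norm r g <= gauss_norm r (f + g))%R.
  by rewrite g_flat; have := gauss_norm_ge r_ge0 (f + g) 0; rewrite coefD f0 add0r /= Rmult_1_r.
have f_le : (gauss_norm r f <= Rmax (gauss_norm r (f + g)) (gauss_norm r g))%R.
  rewrite -(gauss_normN r_ge0 g) -[in X in gauss_norm r X](addrK g f).
  exact: gauss_normD.
by apply: Rmax_lub => //; move: f_le; rewrite Rmax_left //.
Qed.

(** * The map on the disc [D(0, B0)^-] *)

Lemma B0_of_in01 P Q B0 : B0_of absv P Q B0 -> (0 < B0 <= 1)%R.
Proof.
case=> B0_ub B0_lub; split; last by apply: B0_lub => r [[_ r_le1] _].
apply: Rnot_le_lt => B0_le0.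
have ub : is_upper_bound (B0set absv P Q) (B0 - 1)%R.
  by move=> r r_in; have := B0_ub r r_in; case: r_in => -[r_gt0 _] _; lra.
by have := B0_lub _ ub; lra.
Qed.

Section RationalMapOnDisc.
Variables (P Q : {poly K}) (B0 : R) (c0 : K) (R0 : R).
Hypothesis B0_gt0 : (0 < B0)%R.
Hypothesis Q_neq0 : forall z, (absv z < B0)%R -> Q.[z] != 0.
Hypothesis Phi_disc : forall z, (absv z < B0)%R -> (absv (P.[z] / Q.[z] - c0) < R0)%R.
Hypothesis c0E : c0 = P.[0] / Q.[0].
Hypothesis B0_le1 : (B0 <= 1)%R.
Hypothesis c0_gt1 : (1 < absv c0)%R.
Hypothesis R0_le_c0 : (R0 <= absv c0)%R.

Definition shifted_numer := P - c0 *: Q.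

Definition radius r := (gauss_norm r shifted_numer / absv Q.[0])%R.

Lemma denom0_gt0 : (0 < absv Q.[0])%R.
Proof. by apply: absv_gt0; apply: Q_neq0; rewrite absv0. Qed.

Lemma gauss_norm_denom r : (0 <= r)%R -> (r <= B0)%R -> gauss_norm r Q = absv Q.[0].
Proof. exact: gauss_norm_no_root_in_disc. Qed.

Lemma coef0_shifted_numer : shifted_numer`_0 = 0.
Proof.
rewrite /shifted_numer coefB coefZ -!horner_coef0 c0E divfK ?subrr //.
by apply: Q_neq0; rewrite absv0.
Qed.

Lemma gauss_norm_shifted_numer_le : (gauss_norm B0 shifted_numer <= R0 * absv Q.[0])%R.
Proof.
have R0_gt0 : (0 < R0)%R.
  have := @Phi_disc 0; rewrite absv0 => /(_ B0_gt0); apply: Rle_lt_trans; exact: absv_ge0.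
apply: gauss_norm_le_sup => // [|z z_lt]; first by have := denom0_gt0; nra.
have -> : shifted_numer.[z] = (P.[z] / Q.[z] - c0) * Q.[z].
  by rewrite /shifted_numer !hornerE mulrBl divfK ?Q_neq0.
rewrite absvM; apply: Rmult_le_compat; try apply: absv_ge0; first exact/Rlt_le/Phi_disc.
by rewrite -(gauss_norm_denom (absv_ge0 z) (Rlt_le _ _ z_lt)); apply: gauss_norm_horner.
Qed.

Lemma gauss_norm_numer_subZ r b : (0 <= r)%R -> (r <= B0)%R ->
  gauss_norm r (P - b *: Q) = Rmax (gauss_norm r shifted_numer) (absv (c0 - b) * absv Q.[0]).
Proof.
move=> r_ge0 le_rB.
have -> : P - b *: Q = shifted_numer + (c0 - b) *: Q by rewrite /shifted_numer scalerBl addrA subrK.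
rewrite gauss_normD_const_dominant ?coef0_shifted_numer ?gauss_normZ ?gauss_norm_denom //.
by rewrite coefZ absvM horner_coef0.
Qed.

Lemma radius_ge0 r : (0 <= r)%R -> (0 <= radius r)%R.
Proof.
move=> r_ge0; apply: Rmult_le_pos; first exact: gauss_norm_ge0.
exact/Rlt_le/Rinv_0_lt_compat/denom0_gt0.
Qed.

Lemma radius_le r s : (0 <= r)%R -> (r <= s)%R -> (radius r <= radius s)%R.
Proof.
move=> r_ge0 le_rs; apply: Rmult_le_compat_r; first exact/Rlt_le/Rinv_0_lt_compat/denom0_gt0.
exact: gauss_norm_mono.
Qed.

Lemma radius_B0_le : (radius B0 <= R0)%R.
Proof.
have := gauss_norm_shifted_numer_le; have := denom0_gt0; rewrite /radius => g0_gt0 le_R0.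
by apply: (Rmult_le_reg_r (absv Q.[0])) => //; rewrite /Rdiv Rmult_assoc Rinv_l; lra.
Qed.

(* Factor the test polynomial into linear factors: [X - b] is sent to [P - b Q], whose norm on
   [D(0, r)] is [|Q(0)| max(|c0 - b|, radius r)] because [P - c0 Q] vanishes at [0]. *)
Lemma phi_zeta0 r : (0 <= r)%R -> (r <= B0)%R ->
  phi_berk absv P Q (zeta absv 0 r) = zeta absv c0 (radius r).
Proof.
move=> r_ge0 le_rB; have g0_gt0 := denom0_gt0; have rad_ge0 := radius_ge0 r_ge0.
rewrite zetaE /phi_berk disc_norm0 gauss_norm_denom //.
case: (Req_EM_T (absv Q.[0]) 0) => [g0_eq0|_] /=; first lra.
rewrite zetaE; congr Some; apply: functional_extensionality => h.
have [l h_eq size_l] := poly_factor_XsubC h.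
have factor_eq b : gauss_norm r (P - b *: Q) = (absv Q.[0] * disc_norm c0 (radius r) ('X - b%:P))%R.
  rewrite gauss_norm_numer_subZ // disc_norm_XsubC // -RmaxRmult; last lra.
  by rewrite Rmax_comm; congr Rmax; [apply: Rmult_comm | rewrite /radius; field; lra].
rewrite (homog_factor P Q h_eq size_l) (seminorm_scale_prod _ _ _ (gauss_norm_seminorm r_ge0)).
rewrite [in RHS]h_eq (seminorm_scale_prod _ _ _ (disc_norm_seminorm _ rad_ge0)).
rewrite (eq_bigr _ (fun b _ => factor_eq b)) big_Rmult_scale -size_l.
have gl_gt0 : (0 < absv Q.[0] ^ size l)%R by apply: pow_lt.
move: (absv Q.[0] ^ size l)%R (\big[Rmult/1%R]_(b <- l) _) (absv (lead_coef h)) gl_gt0.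
by move=> gl pr lc gl_gt0; field; apply: Rgt_not_eq.
Qed.

Lemma size_shifted_numer_le : (size shifted_numer <= (rdeg P Q).+1)%N.
Proof.
rewrite /shifted_numer /rdeg (leq_trans (size_polyD _ _)) // size_polyN geq_max.
by rewrite !(leq_trans _ (leqSpred _)) ?leq_maxl // (leq_trans (size_scale_leq _ _)) ?leq_maxr.
Qed.

Lemma radius_sub_le r s : (0 <= r)%R -> (r <= s)%R -> (s <= B0)%R ->
  (radius s - radius r <= INR (rdeg P Q) * (s - r) / B0 * R0)%R.
Proof.
move=> r_ge0 le_rs le_sB; have g0_gt0 := denom0_gt0.
have := gauss_norm_sub_le coef0_shifted_numer size_shifted_numer_le r_ge0 le_rs le_sB B0_gt0.
have := radius_B0_le; rewrite /radius.
have c_ge0 : (0 <= INR (rdeg P Q) * (s - r) / B0)%R.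
  apply: Rmult_le_pos; last exact/Rlt_le/Rinv_0_lt_compat.
  by apply: Rmult_le_pos; [apply: pos_INR | lra].
move: (INR (rdeg P Q) * (s - r) / B0)%R c_ge0 (absv Q.[0]) g0_gt0 => c c_ge0 g0 g0_gt0.
move: (gauss_norm s _) (gauss_norm r _) (gauss_norm B0 _) => ns nr nB rad_le sub_le.
have -> : (ns / g0 - nr / g0 = (ns - nr) / g0)%R by field; lra.
apply: Rle_trans (Rmult_le_compat_l _ _ _ c_ge0 rad_le).
apply: (Rmult_le_reg_r g0) => //.
have -> : ((ns - nr) / g0 * g0 = ns - nr)%R by field; lra.
by have -> : (c * (nB / g0) * g0 = c * nB)%R by field; lra.
Qed.

Lemma phi_zeta0_lipschitz r s : (0 <= r)%R -> (r < s)%R -> (s <= B0)%R ->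
  let x := zeta absv 0 r in let y := zeta absv 0 s in
  (dist absv (phi_berk absv P Q x) (phi_berk absv P Q y) <= INR (rdeg P Q) / B0 * dist absv x y)%R
  /\ (dist absv (phi_berk absv P Q y) (phi_berk absv P Q x)
       <= INR (rdeg P Q) / B0 * dist absv y x)%R.
Proof.
move=> r_ge0 lt_rs le_sB x y; have s_ge0 : (0 <= s)%R by lra.
have rad_le_c0 : (radius s <= absv c0)%R.
  by have := radius_le s_ge0 le_sB; have := radius_B0_le; lra.
have rad_rs := radius_le r_ge0 (Rlt_le _ _ lt_rs).
have [dxy dyx] :=
  dist_in_seg (in_seg_zeta0 r_ge0 (Rlt_le _ _ lt_rs) (Rle_trans _ _ _ le_sB B0_le1)).
have [dPxy dPyx] :=
  dist_in_seg (in_seg_zeta_far (Rlt_le _ _ c0_gt1) (radius_ge0 r_ge0) rad_rs rad_le_c0).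
rewrite /x /y !phi_zeta0 ?dxy ?dyx ?dPxy ?dPyx; try lra.
rewrite !diamG_zeta0 ?diamG_zeta_far; try lra; try exact: radius_ge0.
suff : ((radius s - radius r) / absv c0 ^ 2 <= INR (rdeg P Q) / B0 * (s - r))%R.
  by have -> : (radius s / absv c0 ^ 2 - radius r / absv c0 ^ 2 =
    (radius s - radius r) / absv c0 ^ 2)%R by field; lra.
have c02_gt1 : (1 < absv c0 ^ 2)%R by rewrite /=; nra.
have d_ge0 : (0 <= INR (rdeg P Q) / B0 * (s - r))%R.
  apply: Rmult_le_pos; last lra.
  by apply: Rmult_le_pos; [apply: pos_INR | exact/Rlt_le/Rinv_0_lt_compat].
apply: (Rmult_le_reg_r (absv c0 ^ 2)); first lra.
have -> : ((radius s - radius r) / absv c0 ^ 2 * absv c0 ^ 2 = radius s - radius r)%R by field; lra.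
apply: Rle_trans (radius_sub_le r_ge0 (Rlt_le _ _ lt_rs) le_sB) _.
have -> : (INR (rdeg P Q) * (s - r) / B0 * R0 = INR (rdeg P Q) / B0 * (s - r) * R0)%R by field; lra.
by apply: Rmult_le_compat_l => //; rewrite /=; nra.
Qed.

End RationalMapOnDisc.

End AbsoluteValue.

Local Close Scope ring_scope.

Theorem proposition5p7 (K : closedFieldType) (absv : K -> R)
  (Habs : nonarch_complete_abs absv)
  (P Q : {poly K}) (HPQ : ratmap P Q) (d : nat) (Hd : d = rdeg P Q) (Hd1 : leq 1 d)
  (B0 : R) (HB0 : B0_of absv P Q B0)
  (c0 : K) (Hc0 : phi_cl P Q (Some (0 : K)%ring) = Some c0)
  (R0 : R) (HR0 : (0 < R0)%R)
  (Himg : (forall z : K, odisc absv (0 : K)%ring B0 z -> phi_cl P Q (Some z) <> None) /\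
          (forall w : K, (exists z : K, odisc absv (0 : K)%ring B0 z /\ phi_cl P Q (Some z) = Some w)
                         <-> odisc absv c0 R0 w))
  (Hc0big : (1 < absv c0)%R) (HRc0 : (R0 <= absv c0)%R) :
  lip_le absv P Q (in_seg absv (clpt absv (Some (0 : K)%ring)) (zeta absv (0 : K)%ring B0)) (INR d / B0)%R.
Proof.
subst d; case: Himg => Phi_finite Phi_image.
have [B0_gt0 B0_le1] := B0_of_in01 HB0.
have Q_neq0 z : (absv z < B0)%R -> (Q.[z] != 0)%ring.
  move=> z_lt; apply/eqP => Qz0; apply: (Phi_finite z); first by rewrite /odisc subr0.
  by rewrite /phi_cl Qz0 eqxx.
have Phi_disc z : (absv z < B0)%R -> (absv (P.[z] / Q.[z] - c0)%ring < R0)%R.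
  move=> z_lt; apply/Phi_image; exists z; split; first by rewrite /odisc subr0.
  by rewrite /phi_cl (negbTE (Q_neq0 z z_lt)).
have c0E : c0 = (P.[0] / Q.[0])%ring by move: Hc0; rewrite /phi_cl; case: eqP => // _ [<-].
have seg_zeta := in_seg_clpt0_zeta Habs (Rlt_le _ _ B0_gt0).
move=> x y /seg_zeta [r [r_ge0 r_le] ->] /seg_zeta [s [s_ge0 s_le] ->] x_neq_y.
have lip := phi_zeta0_lipschitz Habs B0_gt0 Q_neq0 Phi_disc c0E B0_le1 Hc0big HRc0.
case: (Rtotal_order r s) => [lt_rs | [eq_rs | lt_sr]].
- by case: (lip r s).
- by rewrite eq_rs in x_neq_y.
- by case: (lip s r).
Qed.
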